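(* Let $k \geq 3$ and $D \geq 1$ be integers. For each integer $n \geq 1$, let $R_{k,D}(n)$ denote the largest size of a subset $S \subseteq [n] := \{1,2,\dots,n\}$ that contains no subset of the form $\{i, i+d, i+2d, \dots, i+(k-1)d\}$ with $i \geq 1$ and $1 \leq d \leq D$. Then there exists a rational number $\alpha_{k,D}$ such that $$\lim_{n \to \infty} \frac{R_{k,D}(n)}{n} = \alpha_{k,D}.$$ *)

From Stdlib Require Import Reals QArith.
From mathcomp Require Import all_boot.

Set Implicit Arguments.
Unset Strict Implicit.
Unset Printing Implicit Defensive.
Local Open Scope nat_scope.

(* [n] = {1,...,n} is represented by 'I_n via x |-> x.+1. *)

Definition contains_AP (n k i d : nat) (S : {set 'I_n}) : bool :=
  [forall j : 'I_k, [exists x in S, x.+1 == i + j * d]].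

(* The start i ranges over 1..n (i.e. i : 'I_n.+1 with 1 <= i): a start
   i > n is impossible anyway since i itself must lie in S ⊆ [n]. *)
Definition AP_free (k D n : nat) (S : {set 'I_n}) : bool :=
  [forall i : 'I_n.+1, forall d : 'I_D.+1,
     ((1 <= i) && (1 <= d)) ==> ~~ contains_AP k i d S].

Definition R_kD (k D n : nat) : nat :=
  \max_(S : {set 'I_n} | AP_free k D S) #|S|.

From Stdlib Require Import Reals QArith ZArith Classical Lra Psatz.
From mathcomp Require Import all_boot zify.

Set Implicit Arguments.
Unset Strict Implicit.
Unset Printing Implicit Defensive.
Local Open Scope nat_scope.

(* A progression with k terms and difference at most D has diameter at most
   L = (k-1)D, so AP-freeness of an indicator f : nat -> bool only depends on
   its windows of length L.  Among 2^L + 1 consecutive windows two coincide,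
   at positions s < t.  Cutting out the block [s, t) leaves an AP-free
   sequence, and repeating that block gives an AP-free periodic sequence of
   period at most 2^L.  If c/p is the largest density of such periodic
   sequences, induction on n gives R(n) <= c n / p + O(1), while restricting
   the densest periodic sequence to [1, n] gives R(n) >= c n / p - O(1). *)

Section BoundedProgressions.
Variables k D : nat.

Definition apfree (f : nat -> bool) :=
  forall a d, 0 < d -> d <= D -> ~ (forall j, j < k -> f (a + j * d)).

Definition span := k.-1 * D.
Definition max_period := 2 ^ span.

Definition periodic_apfree p (u : nat -> bool) :=
  0 < p <= max_period /\ apfree (fun x => u (x %% p)).

Definition splice (f : nat -> bool) s p x := if x < s then f x else f (x + p).

Definition same_window (f : nat -> bool) s t :=
  forall i, i < span -> f (s + i) = f (t + i).

Lemma mul_le_span j d : j < k -> d <= D -> j * d <= span.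
Proof. by move=> jk dD; apply: leq_mul => //; lia. Qed.

Lemma apfree_splice f s p :
  apfree f -> same_window f s (s + p) -> apfree (splice f s p).
Proof.
move=> hf hw a d d0 dD H.
case: (leqP s a) => sa.
  apply: (hf (a + p) d d0 dD) => j jk.
  have := H j jk; rewrite /splice ltnNge (leq_trans sa (leq_addr _ _)) /=.
  by rewrite addnAC.
apply: (hf a d d0 dD) => j jk.
have := H j jk; rewrite /splice; case: ifP => // /negbT; rewrite -leqNgt => sx.
have jd := mul_le_span jk dD.
have -> : a + j * d + p = s + p + (a + j * d - s) by lia.
by rewrite -hw ?subnKC //; lia.
Qed.

Lemma apfree_periodize f s p :
  0 < p -> apfree f -> same_window f s (s + p) -> apfree (fun x => f (s + x %% p)).
Proof.
move=> p0 hf hw.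
have fold_mod y : y < p + span -> f (s + y) = f (s + y %% p).
  elim/ltn_ind: y => y IH yl.
  case: (ltnP y p) => yp; first by rewrite modn_small.
  have -> : s + y = s + p + (y - p) by lia.
  rewrite -hw; last by lia.
  rewrite IH; [|lia|lia].
  by rewrite -[in RHS](subnK yp) modnDr.
move=> a d d0 dD H.
apply: (hf (s + a %% p) d d0 dD) => j jk.
have jd := mul_le_span jk dD.
have := ltn_pmod a p0 => ap.
by rewrite -addnA fold_mod ?modnDml ?H //; lia.
Qed.

Lemma repeated_window f :
  exists s t, s < t <= max_period /\ same_window f s t.
Proof.
pose F (s : 'I_max_period.+1) : {ffun 'I_span -> bool} :=
  [ffun i : 'I_span => f (s + i)].
have : ~~ injectiveb F.
  apply/injectiveP => /leq_card.
  by rewrite card_ffun card_bool !card_ord ltnn.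
case/injectivePn => x [y xy Fxy].
have hw : same_window f x y.
  move=> i iL.
  by have := congr1 (fun g : {ffun _} => g (Ordinal iL)) Fxy; rewrite !ffunE.
case: (ltngtP x y) => [lt_xy|lt_yx|eq_xy].
- by exists x, y; rewrite lt_xy -ltnS ltn_ord.
- by exists y, x; rewrite lt_yx -ltnS ltn_ord; split => // i /hw.
- by rewrite (val_inj eq_xy) eqxx in xy.
Qed.

Lemma count_iota_shift (f : nat -> bool) a m :
  count f (iota a m) = count (fun x => f (a + x)) (iota 0 m).
Proof. by rewrite -[a in iota a](addn0 a) iotaDl count_map. Qed.

Lemma count_splice f s p n : s + p <= n ->
  count f (iota 0 n) =
  count (splice f s p) (iota 0 (n - p)) + count (fun x => f (s + x)) (iota 0 p).
Proof.
move=> spn; set m := n - (s + p).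
have -> : n - p = s + m by rewrite /m; lia.
have -> : n = s + p + m by rewrite /m; lia.
rewrite !iotaD !count_cat !add0n (count_iota_shift f s p).
rewrite (count_iota_shift f (s + p)) (count_iota_shift (splice f s p) s).
have -> : count (splice f s p) (iota 0 s) = count f (iota 0 s).
  by apply: eq_in_count => x; rewrite mem_iota => /andP[_ xs]; rewrite /splice xs.
have -> : count (fun x => splice f s p (s + x)) (iota 0 m) =
          count (fun x => f (s + p + x)) (iota 0 m).
  by apply: eq_count => x; rewrite /splice ltnNge leq_addr /= addnAC.
lia.
Qed.

Lemma count_iota_mod (u : nat -> bool) p q : 0 < p ->
  count (fun x => u (x %% p)) (iota 0 (q * p)) = q * count u (iota 0 p).
Proof.
move=> p0; elim: q => [|q IH]; first by rewrite mul0n.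
rewrite mulSnr iotaD count_cat IH add0n mulSnr; congr (_ + _).
rewrite count_iota_shift; apply: eq_in_count => z; rewrite mem_iota => /andP[_ zp] /=.
by rewrite modnMDl modn_small.
Qed.

Lemma card_set_count n (P : pred nat) :
  #|[set y : 'I_n | P y]| = count P (iota 0 n).
Proof.
rewrite cardE /enum_mem size_filter -val_enum_ord count_map enumT.
by apply: eq_count => y; rewrite /= inE.
Qed.

Lemma AP_free_apfree n f : apfree f -> AP_free k D [set y : 'I_n | f y].
Proof.
move=> hf; apply/forallP => i; apply/forallP => d.
apply/implyP => /andP[i1 d1]; apply/negP => /forallP H.
apply: (hf i.-1 d d1) => [|j jk]; first by rewrite -ltnS ltn_ord.
have /existsP[x /andP[xS /eqP xe]] := H (Ordinal jk).
rewrite inE in xS.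
by have -> : i.-1 + j * d = x by move: xe => /=; lia.
Qed.

Lemma apfree_AP_free n (S : {set 'I_n}) :
  0 < k -> AP_free k D S -> apfree (fun x => [exists y in S, val y == x]).
Proof.
move=> k0 hS a d d0 dD H.
have /existsP[y /andP[_ /eqP ya]] := H 0 k0.
have an : a.+1 < n.+1 by have := ltn_ord y; rewrite ya mul0n addn0.
have dD' : d < D.+1 by [].
move: hS => /forallP/(_ (Ordinal an))/forallP/(_ (Ordinal dD'))/implyP.
move=> /(_ d0) /negP; apply; apply/forallP => j.
have /existsP[x /andP[xS /eqP xe]] := H j (ltn_ord j).
by apply/existsP; exists x; rewrite xS /= xe addSn.
Qed.

Lemma R_kD_ge p u n : periodic_apfree p u ->
  count u (iota 0 p) * n <= p * R_kD k D n + p * p.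
Proof.
move=> [/andP[p0 _] hu].
set c := count u (iota 0 p).
have cp : c <= p by rewrite -[p in _ <= p](size_iota 0) count_size.
have R_ge : (n %/ p) * c <= R_kD k D n.
  have hS := AP_free_apfree n hu.
  apply: leq_trans (leq_bigmax_cond _ hS).
  rewrite (card_set_count n (fun x => u (x %% p))) -count_iota_mod //.
  by rewrite -[in leqRHS](subnKC (leq_divM n p)) iotaD count_cat leq_addr.
have := ltn_pmod n p0; have := divn_eq n p.
have : p * (n %/ p * c) <= p * R_kD k D n by rewrite leq_mul2l R_ge orbT.
nia.
Qed.

Section DensestPattern.
Variables c p : nat.
Hypothesis p_gt0 : 0 < p.
Hypothesis densest :
  forall p' u, periodic_apfree p' u -> count u (iota 0 p') * p <= c * p'.

Lemma count_apfree_le n f :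
  apfree f -> p * count f (iota 0 n) <= c * n + p * max_period.
Proof.
elim/ltn_ind: n f => n IH f hf.
case: (leqP n max_period) => nN.
  apply: leq_trans (leq_addl (c * n) _); rewrite leq_mul2l.
  by rewrite (leq_trans (count_size _ _)) ?size_iota ?orbT.
have [s [t [/andP[st tN] hw]]] := repeated_window f.
have hw' : same_window f s (s + (t - s)) by rewrite subnKC // ltnW.
have ts0 : 0 < t - s by rewrite subn_gt0.
have block : count (fun x => f (s + x)) (iota 0 (t - s)) * p <= c * (t - s).
  by apply: densest; split; [rewrite ts0; lia | exact: apfree_periodize ts0 hf hw'].
have := IH (n - (t - s)) ltac:(lia) _ (apfree_splice hf hw').
rewrite (@count_splice f s (t - s) n); last by lia.
nia.
Qed.

Lemma R_kD_le n : 0 < k -> p * R_kD k D n <= c * n + p * max_period.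
Proof.
move=> k0.
have R_le : R_kD k D n <= (c * n + p * max_period) %/ p.
  apply/bigmax_leqP => S hS; rewrite leq_divRL // mulnC.
  have -> : #|S| = #|[set y : 'I_n | [exists z in S, val z == val y]]|.
    apply: eq_card => y; rewrite inE.
    apply/idP/existsP => [yS|[z /andP[zS /eqP /val_inj <-]]] //.
    by exists y; rewrite yS eqxx.
  rewrite (card_set_count n (fun x => [exists z in S, val z == x])).
  exact: count_apfree_le (apfree_AP_free k0 hS).
by apply: leq_trans (leq_divM _ p); rewrite mulnC leq_mul2r R_le orbT.
Qed.

End DensestPattern.

Lemma exists_greatest_bounded (P : nat -> Prop) B :
  (exists m, P m) -> (forall m, P m -> m <= B) ->
  exists m, P m /\ forall m', P m' -> m' <= m.
Proof.
elim: B => [|B IH] [m0 h0] hB.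
  by exists m0; split => // m' /hB; have := hB _ h0; lia.
case: (classic (P B.+1)) => hP; first by exists B.+1.
apply: IH; first by exists m0.
move=> m hm; have := hB _ hm; rewrite leq_eqVlt => /orP[/eqP e|] //.
by rewrite e in hm.
Qed.

(* Densities c/p with p <= N are compared through the naturals c * (N! / p). *)
Lemma exists_densest_pattern : 0 < k -> exists p u, periodic_apfree p u /\
  forall p' u', periodic_apfree p' u' ->
    count u' (iota 0 p') * p <= count u (iota 0 p) * p'.
Proof.
move=> k0.
set N := max_period.
have divnK_fact q : 0 < q <= N -> N`! %/ q * q = N`!.
  by move=> qN; rewrite divnK // dvdn_fact.
pose P m := exists p u, periodic_apfree p u /\ m = count u (iota 0 p) * (N`! %/ p).
have [m [[p [u [hu ->]]] hm]] : exists m, P m /\ forall m', P m' -> m' <= m.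
  apply: (exists_greatest_bounded (B := N`!)).
    exists 0, 1, (fun _ => false); split => //; split; first by rewrite expn_gt0.
    by move=> a d _ _ /(_ 0 k0).
  move=> _ [q [v [[qN _] ->]]].
  rewrite -[in leqRHS](divnK_fact q qN) mulnC leq_mul2l.
  by rewrite -[q in _ <= q](size_iota 0) count_size orbT.
exists p, u; split => // p' u' hu'.
have h := hm _ (ex_intro _ p' (ex_intro _ u' (conj hu' erefl))).
rewrite -(leq_pmul2r (fact_gt0 N)).
have eY := divnK_fact _ hu.1; have eX := divnK_fact _ hu'.1.
move: h eY eX; set F := N`!; set Y := F %/ p; set X := F %/ p'; clearbody X Y.
move=> /(leq_mul (leqnn (p * p'))) h eY eX; rewrite -{1}eX -eY.
lia.
Qed.

End BoundedProgressions.

Section RatioLimit.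
Local Open Scope R_scope.

Lemma cvg_ratio_of_bounds (r : nat -> nat) (c p K : nat) : (0 < p)%N ->
  (forall n, p * r n <= c * n + p * K)%N -> (forall n, c * n <= p * r n + p * K)%N ->
  Un_cv (fun n => Rdiv (INR (r n)) (INR n)) (Rdiv (INR c) (INR p)).
Proof.
move=> p0 hu hl eps eps0.
have [N0 hN] := INR_unbounded (INR K / eps).
exists N0.+1 => n hn.
have np : (0 < INR n) by apply: lt_0_INR; lia.
have pp : (0 < INR p) by apply: lt_0_INR; apply/ltP.
have Hu : (INR p * INR (r n) <= INR c * INR n + INR p * INR K).
  by rewrite -!mult_INR -plus_INR; apply: le_INR; apply/leP.
have Hl : (INR c * INR n <= INR p * INR (r n) + INR p * INR K).
  by rewrite -!mult_INR -plus_INR; apply: le_INR; apply/leP.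
have nN : (INR N0 <= INR n) by apply: le_INR; lia.
have hK : (INR K < eps * INR n).
  have e : INR K = (INR K / eps * eps) by field; lra.
  rewrite e; nra.
rewrite /R_dist.
set y := INR (r n) / INR n - INR c / INR p.
have ey : y * (INR p * INR n) = INR p * INR (r n) - INR c * INR n.
  by rewrite /y; field; split; lra.
have z0 : 0 < INR p * INR n by nra.
apply: Rabs_def1; nra.
Qed.

Lemma Q2R_ratio (c p : nat) : (0 < p)%N ->
  Q2R (Z.of_nat c # Pos.of_nat p) = INR c / INR p.
Proof.
move=> p0; rewrite /Q2R /= -INR_IZR_INZ -positive_nat_Z Nat2Pos.id; last by lia.
by rewrite -INR_IZR_INZ.
Qed.

End RatioLimit.

Theorem mainTheorem1 (k D : nat) (hk : (3 <= k)%N) (hD : (1 <= D)%N) :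
  exists alpha : Q,
    Un_cv (fun n : nat => Rdiv (INR (R_kD k D n)) (INR n)) (Q2R alpha).
Proof.
have k0 : 0 < k by lia.
have [p [u [hu densest]]] := exists_densest_pattern D k0.
have p0 : 0 < p by case: hu => /andP[].
set c := count u (iota 0 p) in densest.
exists (Z.of_nat c # Pos.of_nat p)%Q; rewrite Q2R_ratio //.
apply: (@cvg_ratio_of_bounds _ c p (max_period k D + p) p0) => n.
- apply: leq_trans (R_kD_le p0 densest n k0) _.
  by rewrite leq_add2l leq_mul2l leq_addr orbT.
- apply: leq_trans (R_kD_ge n hu) _.
  by rewrite leq_add2l leq_mul2l leq_addl orbT.
Qed.
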